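(* Let $q$ be a prime power, $d$ a positive divisor of $q-1$, $m=\frac{q-1}{d}$, $C$ the index $d$ subgroup of $\mathbb{F}_q^{\ast}$, and $\omega$ a primitive root of $\mathbb{F}_q$; put $C_i=\omega^iC$. Then $\operatorname{GCP}(d,q)$ is isomorphic as a permutation group to $\operatorname{Hol}(C)\wr_{\mathrm{imp}}\operatorname{Sym}(d)$. More precisely, let $\beta_\omega:C\times\{0,\dots,d-1\}\to\mathbb{F}_q^{\ast}$, $(c,i)\mapsto c\omega^i$, and let $\iota_\omega$ map the wreath product element $(\psi,(\lambda(s_i,b_i))_{i=0,\dots,d-1})$ to the restriction to $\mathbb{F}_q^{\ast}$ of $$f_\omega\big((\omega^{\psi(i)-is_{\psi(i)}}b_{\psi(i)})_{i=0,\dots,d-1},\,(s_{\psi(i)})_{i=0,\dots,d-1}\big)$$ (with exponents $s_{\psi(i)}$ taken as representatives in $\{1,\dots,m\}$). Then $\beta_\omega$ is a bijection, $\iota_\omega$ is a group isomorphism onto $\operatorname{GCP}(d,q)$, and $\beta_\omega(x^g)=\beta_\omega(x)^{\iota_\omega(g)}$ for all $g$ and all $x\in C\times\{0,\dots,d-1\}$. The inverse of $\iota_\omega$ sends $f_\omega(\vec a,\vec r)_{\mid\mathbb{F}_q^{\ast}}\in\operatorname{GCP}(d,q)$ to $$\big(\psi,(\lambda(r_{\psi^{-1}(i)},\,\omega^{r_{\psi^{-1}(i)}\psi^{-1}(i)-i}a_{\psi^{-1}(i)}))_{i=0,\dots,d-1}\big),$$ where $\psi\in\operatorname{Sym}(d)$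 is the unique permutation with $f_\omega(\vec a,\vec r)(C_i)=C_{\psi(i)}$ for all $i$. Moreover: (1) $\iota_\omega^{-1}(\operatorname{CP}(d,q))$ is the set of all elements $(\psi,(\lambda(s,b_i))_{i})$ with $\psi\in\operatorname{Sym}(d)$, $s$ an integer coprime to $m$ (the same for all $i$), and $b_0,\dots,b_{d-1}\in C$; (2) $\iota_\omega^{-1}(\operatorname{FOCP}(d,q))$ is the set of all elements $(\psi,(\lambda(1,b_i))_i)$ with $\psi\in\operatorname{Sym}(d)$ and $b_i\in C$, i.e. the subgroup $C_{\mathrm{reg}}\wr_{\mathrm{imp}}\operatorname{Sym}(d)$, where $C_{\mathrm{reg}}=\{\lambda(1,c):c\in C\}$.
   Context: Groups act on the right: for permutations $\sigma,\psi$, the product $\sigma\psi$ means ''apply $\sigma$ first, then $\psi$''. For $\vec a=(a_0,\dots,a_{d-1})\in\mathbb{F}_q^d$ and $\vec r=(r_0,\dots,r_{d-1})\in\{1,\dots,m\}^d$, $f_\omega(\vec a,\vec r):\mathbb{F}_q\to\mathbb{F}_q$ is the map with $0\mapsto 0$ and $x\mapsto a_ix^{r_i}$ for $x\in C_i$ (an ''index $d$ generalized cyclotomic mapping''); if all $r_i$ equal a common $r$ it is an ''$r$-th order cyclotomic mapping'', and ''first-order'' if $r=1$. $\operatorname{GCP}(d,q)$ (resp. $\operatorname{CP}(d,q)$, $\operatorname{FOCP}(d,q)$) is the permutation group on $\mathbb{F}_q^{\ast}$ consisting of restrictions to $\mathbb{F}_q^{\ast}$ of those index $d$ generalized cyclotomic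 mappings (resp. $r$-th order cyclotomic mappings for some $r$, resp. first-order cyclotomic mappings) that are permutations of $\mathbb{F}_q$. $\operatorname{Hol}(C)$ is the permutation group on $C$ of all maps $\lambda(r,a):c\mapsto ac^r$ with $a\in C$ and $r$ an integer coprime to $|C|=m$. For a permutation group $G\le\operatorname{Sym}(\Omega)$, $\operatorname{Sym}(d)$ denotes the symmetric group on $\{0,\dots,d-1\}$, and $G\wr_{\mathrm{imp}}\operatorname{Sym}(d)$ is the permutation group on $\Omega\times\{0,\dots,d-1\}$ whose elements are pairs $(\sigma,(g_0,\dots,g_{d-1}))$ with $\sigma\in\operatorname{Sym}(d)$, $g_i\in G$, acting by $(x,i)\mapsto(g_{\sigma(i)}(x),\sigma(i))$. An isomorphism of permutation groups $G\le\operatorname{Sym}(\Omega)\to H\le\operatorname{Sym}(\Lambda)$ is a pair $(\beta,\iota)$ with $\beta:\Omega\to\Lambda$ a bijection and $\iota:G\to H$ a group isomorphism with $\beta(x^g)=\beta(x)^{\iota(g)}$. *)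

From HB Require Import structures.
From mathcomp Require Import all_boot all_order all_algebra all_fingroup.
Unset Printing Implicit Defensive.
Import GRing.Theory.
Local Open Scope ring_scope.

Definition mC (F : finFieldType) (d : nat) : nat := (#|F|.-1 %/ d)%N.

(* C = the index-d subgroup of F^*, i.e. the unique subgroup of order m,
   namely {x | x^m = 1} *)
Definition inC {F : finFieldType} (d : nat) (x : F) : bool := x ^+ mC F d == 1.

Definition Ctype (F : finFieldType) (d : nat) := {x : F | inC d x}.
HB.instance Definition _ (F : finFieldType) (d : nat) := Finite.on (Ctype F d).

Definition Fstar (F : finFieldType) := {x : F | x != 0}.
HB.instance Definition _ (F : finFieldType) := Finite.on (Fstar F).

Definition fstar1 (F : finFieldType) : Fstar F :=
  exist (fun x : F => x != 0) 1 (oner_neq0 F).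

Definition Omega (F : finFieldType) (d : nat) := (Ctype F d * 'I_d)%type.
HB.instance Definition _ (F : finFieldType) (d : nat) := Finite.on (Omega F d).

Definition inCi {F : finFieldType} (d : nat) (w : F) (i : nat) (x : F) : bool :=
  inC d (x / w ^+ i).

Definition cycidx {F : finFieldType} (d : nat) (w x : F) : option 'I_d :=
  [pick i : 'I_d | inCi d w i x].

Definition fgen {F : finFieldType} (d : nat) (w : F)
  (a : 'I_d -> F) (r : 'I_d -> nat) (x : F) : F :=
  if x == 0 then 0 else
  if cycidx d w x is Some i then a i * x ^+ r i else 0.

Definition GCP {F : finFieldType} (d : nat) (w : F) (p : {perm Fstar F}) : Prop :=
  exists (a : 'I_d -> F) (r : 'I_d -> nat),
    [/\ (forall i, 0 < r i <= mC F d)%N, bijective (fgen d w a r)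
      & forall x : Fstar F, val (p x) = fgen d w a r (val x)].

Definition CP {F : finFieldType} (d : nat) (w : F) (p : {perm Fstar F}) : Prop :=
  exists (a : 'I_d -> F) (r0 : nat),
    [/\ (0 < r0 <= mC F d)%N, bijective (fgen d w a (fun _ => r0))
      & forall x : Fstar F, val (p x) = fgen d w a (fun _ => r0) (val x)].

Definition FOCP {F : finFieldType} (d : nat) (w : F) (p : {perm Fstar F}) : Prop :=
  exists (a : 'I_d -> F),
    bijective (fgen d w a (fun _ => 1%N))
    /\ forall x : Fstar F, val (p x) = fgen d w a (fun _ => 1%N) (val x).

(* g acts on C x {0..d-1} as the wreath element (psi, (lambda(s_j, b_j))_j):
   (x, i) |-> (b_{psi i} * x ^ s_{psi i}, psi i) *)
Definition acts_as_wr {F : finFieldType} (d : nat) (g : {perm Omega F d})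
  (psi : {perm 'I_d}) (s : 'I_d -> int) (b : 'I_d -> Ctype F d) : Prop :=
  forall (x : Ctype F d) (i : 'I_d),
    (g (x, i)).2 = psi i /\ val (g (x, i)).1 = val (b (psi i)) * val x ^ s (psi i).

Definition Wr {F : finFieldType} (d : nat) (g : {perm Omega F d}) : Prop :=
  exists (psi : {perm 'I_d}) (s : 'I_d -> int) (b : 'I_d -> Ctype F d),
    (forall j, coprimez (s j) (mC F d)) /\ acts_as_wr d g psi s b.

Definition beta {F : finFieldType} (d : nat) (w : F) (ci : Omega F d) : Fstar F :=
  insubd (fstar1 F) (val ci.1 * w ^+ ci.2).

Definition repm (F : finFieldType) (d : nat) (s : int) : nat :=
  let t := absz (s %% (mC F d)%:Z)%Z in if t == 0%N then mC F d else t.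

Definition iota_r (F : finFieldType) (d : nat) (psi : {perm 'I_d}) (s : 'I_d -> int)
  (i : 'I_d) : nat := repm F d (s (psi i)).

Definition iota_a {F : finFieldType} (d : nat) (w : F) (psi : {perm 'I_d})
  (s : 'I_d -> int) (b : 'I_d -> Ctype F d) (i : 'I_d) : F :=
  w ^ ((psi i)%:Z - (i * iota_r F d psi s i)%:Z) * val (b (psi i)).

Definition blockmap {F : finFieldType} (d : nat) (w : F) (f : F -> F)
  (psi : {perm 'I_d}) : Prop :=
  forall (i : 'I_d) (y : F), inCi d w (psi i) y <-> exists2 x, inCi d w i x & f x = y.

From HB Require Import structures.
From mathcomp Require Import all_boot all_order all_algebra all_fingroup finfield.
From mathcomp Require Import ring.
Import GRing.Theory.
Local Open Scope ring_scope.

(* Since w generates F^*, every x in F^* is uniquely c w^i with c in C and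
   i < d (coset_decomp, coset_decomp_uniq), so beta : (c, i) |-> c w^i is a
   bijection C x I_d -> F^*.  We then DEFINE iota g := beta o g o beta^{-1};
   this is automatically an injective group homomorphism, equivariant along
   beta, with inverse p |-> beta^{-1} o p o beta.  What remains is to compute:
   - a wreath element (psi, (lambda(s_j, b_j))_j) is transported to the
     generalized cyclotomic mapping with parameters iota_a, iota_r (iota_wr);
   - conversely, if iota g = f_w(a, r), evaluating at c w^i shows that g sends
     the fibre C x {i} to the fibre over some psi i by c |-> t_i c^(r_i); the
     fibre map psi is a permutation, injectivity of g forces gcd(r_i, m) = 1,
     and t_i = w^(r_i i - psi i) a_i (iota_fgen_action). *)

Section IndexDSubgroup.
Context {F : finFieldType} {d : nat}.
Hypothesis d_dvd : (d %| #|F|.-1)%N.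

Local Notation n := (#|F|.-1).
Local Notation m := (mC F d).

Lemma unit_expn {x : F} : x != 0 -> x ^+ n = 1.
Proof.
move=> x0; apply: (mulfI x0); rewrite -exprS prednK ?expf_card ?mulr1 //.
exact: ltn_trans (finNzRing_gt1 F).
Qed.

Lemma n_gt0 : (0 < n)%N.
Proof. by rewrite -ltnS prednK ?finNzRing_gt1 // (ltn_trans _ (finNzRing_gt1 F)). Qed.

Lemma n_eq : n = (m * d)%N.
Proof. by rewrite /mC divnK. Qed.

Lemma m_gt0 : (0 < m)%N.
Proof. by have := n_gt0; rewrite n_eq muln_gt0 => /andP[]. Qed.

Lemma inC_neq0 {x : F} : inC d x -> x != 0.
Proof.
by apply: contraTneq => ->; rewrite /inC expr0n eqn0Ngt m_gt0 /= eq_sym oner_eq0.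
Qed.

Lemma inC1 : inC d (1 : F).
Proof. by rewrite /inC expr1n. Qed.

Lemma inCM {x y : F} : inC d x -> inC d y -> inC d (x * y).
Proof. by rewrite /inC exprMn => /eqP-> /eqP->; rewrite mulr1. Qed.

Lemma inCV {x : F} : inC d x -> inC d x^-1.
Proof. by rewrite /inC exprVn => /eqP->; rewrite invr1. Qed.

Lemma inCX {x : F} k : inC d x -> inC d (x ^+ k).
Proof. by rewrite /inC -exprM mulnC exprM => /eqP->; rewrite expr1n. Qed.

Lemma repm_range s : (0 < repm F d s <= m)%N.
Proof.
rewrite /repm; set t := (s %% m)%Z.
have t_ge0 : (0 <= t)%R by apply: modz_ge0; rewrite eqz_nat -lt0n m_gt0.
have t_lt : (t < m%:Z)%R by apply: ltz_pmod; rewrite ltz_nat m_gt0.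
case: eqP => [_|/eqP t_neq0]; first by rewrite m_gt0 leqnn.
by rewrite lt0n t_neq0 ltnW // -ltz_nat gez0_abs.
Qed.

Lemma repm_exp (c : F) s : inC d c -> c ^+ repm F d s = c ^ s.
Proof.
move=> hc; have t_ge0 : (0 <= (s %% m)%Z)%R.
  by apply: modz_ge0; rewrite eqz_nat -lt0n m_gt0.
have -> : c ^ s = c ^ (s %% m)%Z.
  rewrite {1}(divz_eq s m) expfzDr ?inC_neq0 // -exprz_exp exprzAC.
  by rewrite -[c ^ m%:Z]/(c ^+ m) (eqP hc) exp1rz mul1r.
by rewrite /repm -{3}(gez0_abs t_ge0); case: eqP => [->|//]; exact/eqP.
Qed.

Lemma repm1 : repm F d 1 = 1%N.
Proof.
rewrite /repm; have [m_le1|m_gt1] := leqP m 1%N.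
  by have /eqP-> : m == 1%N by rewrite eqn_leq m_le1 m_gt0.
by rewrite modz_small //= ltz_nat.
Qed.

End IndexDSubgroup.

Section Cosets.
Context {F : finFieldType} {d : nat} {w : F}.
Hypotheses (d_gt0 : (0 < d)%N) (d_dvd : (d %| #|F|.-1)%N)
  (w_prim : (#|F|.-1).-primitive_root w).

Local Notation n := (#|F|.-1).
Local Notation m := (mC F d).

Lemma w_neq0 : w != 0.
Proof.
apply/eqP => w0; move: (prim_expr_order w_prim).
by rewrite w0 expr0n eqn0Ngt n_gt0 => /esym/eqP; rewrite oner_eq0.
Qed.

Lemma wX_neq0 k : w ^+ k != 0.
Proof. exact: expf_neq0 w_neq0. Qed.

Lemma inC_wX k : inC d (w ^+ k) = (d %| k)%N.
Proof.
rewrite /inC -exprM -(prim_order_dvd w_prim) (n_eq d_dvd) [(k * m)%N]mulnC.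
by rewrite dvdn_pmul2l ?(m_gt0 d_dvd).
Qed.

Lemma coset_decomp {x : F} : x != 0 -> exists c (i : 'I_d), inC d c /\ x = c * w ^+ i.
Proof.
move=> x0; have [k ->] := prim_rootP w_prim (unit_expn x0).
exists (w ^+ (k %/ d * d)), (Ordinal (ltn_pmod k d_gt0)); split.
  by rewrite inC_wX dvdn_mull.
by rewrite -exprD /= -divn_eq.
Qed.

(* ... and this decomposition is unique: c w^i = c' w^j with i <= j forces
   w^(j - i) in C, so d divides j - i < d. *)
Lemma coset_decomp_uniq {c c' : F} {i j : 'I_d} : inC d c -> inC d c' ->
  c * w ^+ i = c' * w ^+ j -> i = j /\ c = c'.
Proof.
move=> hc hc' e; suff ij : i = j.
  by split=> //; subst j; apply: (mulIf (wX_neq0 i)).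
wlog le_ij : i j c c' hc hc' e / (i <= j)%N.
  move=> H; case: (leqP i j) => [le_ij|/ltnW le_ji]; first exact: H hc hc' e le_ij.
  exact/esym/(H _ _ _ _ hc' hc (esym e) le_ji).
have : inC d (w ^+ (j - i)).
  have -> : w ^+ (j - i) = c / c'.
    rewrite (exprB le_ij) ?unitfE ?w_neq0 // -[c](mulfK (wX_neq0 i)) e.
    by field; rewrite (inC_neq0 d_dvd hc') wX_neq0.
  by rewrite inCM ?inCV.
rewrite inC_wX => dvd_ji; apply/val_inj/eqP; rewrite eqn_leq le_ij -subn_eq0.
apply: contraTT dvd_ji; rewrite -lt0n => ji_gt0.
by rewrite gtnNdvd // (leq_ltn_trans (leq_subr _ _)).
Qed.

Lemma wz_subK (p q : nat) : w ^ (p%:Z - q%:Z) * w ^+ q = w ^+ p.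
Proof. by rewrite -[w ^+ q]/(w ^ q%:Z) -expfzDr ?w_neq0 // subrK. Qed.

Lemma inCi_prod {c : F} (i : nat) : inC d c -> inCi d w i (c * w ^+ i).
Proof. by move=> hc; rewrite /inCi mulfK ?wX_neq0. Qed.

Lemma inCi_uniq {i j : 'I_d} {x : F} : inCi d w i x -> inCi d w j x -> i = j.
Proof.
move=> hi hj; suff: x / w ^+ i * w ^+ i = x / w ^+ j * w ^+ j.
  by case/(coset_decomp_uniq hi hj).
by rewrite !divfK ?wX_neq0.
Qed.

Lemma cycidx_prod {c : F} (i : 'I_d) : inC d c -> cycidx d w (c * w ^+ i) = Some i.
Proof.
move=> hc; rewrite /cycidx; case: pickP => [j hj|none].
  by rewrite (inCi_uniq hj (inCi_prod i hc)).
by move: (none i); rewrite inCi_prod.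
Qed.

Lemma fgen_coset (a : 'I_d -> F) (r : 'I_d -> nat) {c : F} (i : 'I_d) : inC d c ->
  fgen d w a r (c * w ^+ i) = a i * c ^+ r i * w ^+ (i * r i).
Proof.
move=> hc; rewrite /fgen mulf_eq0 (negbTE (inC_neq0 d_dvd hc)) (negbTE (wX_neq0 i)).
by rewrite cycidx_prod // exprMn -exprM mulrA.
Qed.

(* A power map c |-> c^r that is injective on the cyclic group C of order m
   forces r to be coprime to m: otherwise a nontrivial element of order
   dividing gcd(r, m) would be sent to 1. *)
Lemma coprime_of_injective_pow (r : nat) :
  (forall x y : F, inC d x -> inC d y -> x ^+ r = y ^+ r -> x = y) ->
  coprime r m.
Proof.
move=> inj; apply/negPn/negP => ncop.
have g_gt1 : (1 < gcdn r m)%N.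
  have : (0 < gcdn r m)%N by rewrite gcdn_gt0 (m_gt0 d_dvd) orbT.
  by move: ncop; rewrite /coprime; case: (gcdn r m) => [|[|]].
move: (gcdn r m) g_gt1 (dvdn_gcdl r m) (dvdn_gcdr r m).
move=> g g_gt1 /dvdnP[s r_eq] /dvdnP[k m_eq].
have k_gt0 : (0 < k)%N by move: (m_gt0 d_dvd); rewrite m_eq muln_gt0 => /andP[].
have z_in : inC d (w ^+ (d * k)) by rewrite inC_wX dvdn_mulr.
have /eqP : w ^+ (d * k) = 1.
  apply: inj => //; first exact: inC1.
  rewrite expr1n -exprM; apply/eqP; rewrite -(prim_order_dvd w_prim).
  by rewrite (n_eq d_dvd) m_eq r_eq; apply/dvdnP; exists s; ring.
rewrite -(prim_order_dvd w_prim) (n_eq d_dvd) m_eq => /dvdn_leq.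
rewrite muln_gt0 d_gt0 k_gt0 mulnAC [(d * k)%N]mulnC => /(_ isT).
by rewrite leqNgt ltn_Pmulr ?muln_gt0 ?k_gt0.
Qed.

End Cosets.

Lemma bij_of_perm {F : finFieldType} {f : F -> F} {p : {perm Fstar F}} :
  f 0 = 0 -> (forall x : Fstar F, val (p x) = f (val x)) -> bijective f.
Proof.
move=> f0 fp; apply: injF_bij => x y.
have fE z (z0 : z != 0) : f z = val (p (exist _ z z0)) by rewrite fp.
have pz_neq0 z (z0 : z != 0) : f z != 0 by rewrite fE (valP (p _)).
have [->|x0] := eqVneq x 0; have [->|y0] := eqVneq y 0 => //.
- by rewrite f0 => /esym/eqP; rewrite (negbTE (pz_neq0 y y0)).
- by rewrite f0 => /eqP; rewrite (negbTE (pz_neq0 x x0)).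
by rewrite (fE x x0) (fE y y0) => /val_inj/perm_inj/(congr1 val).
Qed.

Lemma perm_of_bij {F : finFieldType} {f : F -> F} : f 0 = 0 -> bijective f ->
  exists p : {perm Fstar F}, forall x : Fstar F, val (p x) = f (val x).
Proof.
move=> f0 fbij; have f_neq0 (y : F) : y != 0 -> f y != 0.
  by apply: contra => /eqP fy0; apply/eqP/(bij_inj fbij); rewrite fy0 f0.
pose pf (y : Fstar F) : Fstar F := insubd (fstar1 F) (f (val y)).
have pfE y : val (pf y) = f (val y) by rewrite val_insubd f_neq0 ?(valP y).
have pf_inj : injective pf.
  by move=> x y e; apply/val_inj/(bij_inj fbij); rewrite -!pfE e.
by exists (perm pf_inj) => x; rewrite permE pfE.
Qed.

Lemma fgen0 {F : finFieldType} (d : nat) (w : F) a r : fgen d w a r 0 = 0.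
Proof. by rewrite /fgen eqxx. Qed.

Lemma eq_fgen_r {F : finFieldType} (d : nat) (w : F) a (r r' : 'I_d -> nat) :
  r =1 r' -> fgen d w a r =1 fgen d w a r'.
Proof.
by move=> rr' x; rewrite /fgen; case: (x == 0) => //; case: cycidx => // i; rewrite rr'.
Qed.

Section Transport.
Context {F : finFieldType} {d : nat} {w : F}.
Hypotheses (d_gt0 : (0 < d)%N) (d_dvd : (d %| #|F|.-1)%N)
  (w_prim : (#|F|.-1).-primitive_root w).

Definition c1 : Ctype F d := exist _ 1 inC1.
Definition i0 : 'I_d := Ordinal d_gt0.

Lemma val_c1 : val c1 = 1.
Proof. by []. Qed.

Lemma val_beta (ci : Omega F d) : val (beta d w ci) = val ci.1 * w ^+ ci.2.
Proof.
by rewrite /beta val_insubd mulf_neq0 ?(wX_neq0 w_prim) ?(inC_neq0 d_dvd (valP ci.1)).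
Qed.

Definition binv (y : Fstar F) : Omega F d :=
  if cycidx d w (val y) is Some i then (insubd c1 (val y / w ^+ i), i) else (c1, i0).

Lemma betaK : cancel (beta d w) binv.
Proof.
case=> c i; rewrite /binv val_beta /= (cycidx_prod d_dvd w_prim _ (valP c)).
congr pair; apply: val_inj.
by rewrite val_insubd mulfK ?(wX_neq0 w_prim) // (valP c).
Qed.

Lemma binvK : cancel binv (beta d w).
Proof.
move=> y; have [c [i [hc yE]]] := coset_decomp d_gt0 d_dvd w_prim (valP y).
rewrite /binv yE (cycidx_prod d_dvd w_prim _ hc); apply: val_inj.
by rewrite val_beta /= yE val_insubd mulfK ?(wX_neq0 w_prim) // hc.
Qed.

Lemma beta_bij : bijective (beta d w).
Proof. by exists binv; [exact: betaK | exact: binvK]. Qed.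

Lemma beta_inj : injective (beta d w). Proof. exact: can_inj betaK. Qed.
Lemma binv_inj : injective binv. Proof. exact: can_inj binvK. Qed.

Definition iota_fun (g : {perm Omega F d}) (y : Fstar F) := beta d w (g (binv y)).
Lemma iota_fun_inj g : injective (iota_fun g).
Proof. by move=> x y /beta_inj/perm_inj/binv_inj. Qed.
Definition iota g : {perm Fstar F} := perm (iota_fun_inj g).

Lemma iota_beta g x : iota g (beta d w x) = beta d w (g x).
Proof. by rewrite permE /iota_fun betaK. Qed.

Lemma iotaM g h : iota (g * h)%g = (iota g * iota h)%g.
Proof. by apply/permP=> y; rewrite !permM !permE /iota_fun betaK permM. Qed.

Lemma iota_inj g h : iota g = iota h -> g = h.
Proof. by move=> e; apply/permP=> x; apply: beta_inj; rewrite -!iota_beta e. Qed.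

Definition iota_inv_fun (p : {perm Fstar F}) (x : Omega F d) := binv (p (beta d w x)).
Lemma iota_inv_fun_inj p : injective (iota_inv_fun p).
Proof. by move=> x y /binv_inj/perm_inj/beta_inj. Qed.
Definition iota_inv p : {perm Omega F d} := perm (iota_inv_fun_inj p).

Lemma iota_invK p : iota (iota_inv p) = p.
Proof. by apply/permP=> y; rewrite permE /iota_fun permE /iota_inv_fun !binvK. Qed.

End Transport.

Section WreathProduct.
Context {F : finFieldType} {d : nat} {w : F}.
Hypotheses (d_gt0 : (0 < d)%N) (d_dvd : (d %| #|F|.-1)%N)
  (w_prim : (#|F|.-1).-primitive_root w).

Local Notation m := (mC F d).
Local Notation iota := (iota d_gt0 d_dvd w_prim).

Lemma iota_wr {g psi s b} : acts_as_wr d g psi s b -> forall x : Fstar F,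
  val (iota g x) = fgen d w (iota_a d w psi s b) (iota_r F d psi s) (val x).
Proof.
move=> gE x; rewrite -(binvK d_gt0 d_dvd w_prim x); case: (binv d_gt0 x) => c i.
have [g2 g1] := gE c i; rewrite iota_beta // !val_beta // g1 g2 [(c, i).1]/= [(c, i).2]/=.
rewrite (fgen_coset d_dvd w_prim) ?(valP c) // /iota_a /iota_r repm_exp ?(valP c) //.
by rewrite -[w ^+ psi i](wz_subK w_prim _ (i * repm F d (s (psi i)))); ring.
Qed.

Lemma fibre_perm (g : {perm Omega F d}) (k : 'I_d -> 'I_d) :
  (forall c i, (g (c, i)).2 = k i) -> exists psi : {perm 'I_d}, k =1 psi.
Proof.
move=> gk; pose k' j := (g^-1 (c1, j))%g.2.
have k'K : cancel k' k.
  by move=> j; rewrite /k' -(gk (g^-1 (c1, j))%g.1) -surjective_pairing permKV.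
exists (perm (can_inj k'K))^-1%g => i.
by rewrite -{1}(permKV (perm (can_inj k'K)) i) permE k'K.
Qed.

(* Conversely, suppose iota g = f_w(a, r).  Comparing both sides on the point
   beta (c, i) = c w^i shows that g maps the fibre C x {i} to a single fibre,
   by c |-> c^(r_i) t_i. *)
Section CyclotomicToWreath.
Context {g : {perm Omega F d}} {a : 'I_d -> F} {r : 'I_d -> nat}.
Hypothesis gE : forall x : Fstar F, val (iota g x) = fgen d w a r (val x).

Lemma iota_fgen_point (c : Ctype F d) (i : 'I_d) :
  val (g (c, i)).1 * w ^+ (g (c, i)).2 = a i * val c ^+ r i * w ^+ (i * r i).
Proof.
rewrite -val_beta // -iota_beta // gE val_beta //.
by rewrite (fgen_coset d_dvd w_prim) // (valP c).
Qed.

Lemma iota_fgen_shape (c : Ctype F d) (i : 'I_d) :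
  (g (c, i)).2 = (g (c1, i)).2 /\ val (g (c, i)).1 = val c ^+ r i * val (g (c1, i)).1.
Proof.
apply: (coset_decomp_uniq d_dvd w_prim (valP _)); first by rewrite inCM ?inCX // (valP _).
by rewrite -mulrA !iota_fgen_point val_c1 expr1n mulr1; ring.
Qed.

Lemma iota_fgen_coeff (i : 'I_d) :
  val (g (c1, i)).1 = w ^ ((r i * i)%:Z - (g (c1, i)).2%:Z) * a i.
Proof.
apply: (mulIf (wX_neq0 w_prim (g (c1, i)).2)); rewrite iota_fgen_point val_c1 expr1n mulr1.
by rewrite mulrAC (wz_subK w_prim) mulnC mulrC.
Qed.

(* Injectivity of g on the fibre over i makes c |-> c^(r_i) injective on C. *)
Lemma iota_fgen_coprime (i : 'I_d) : coprime (r i) m.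
Proof.
apply: (coprime_of_injective_pow d_gt0 d_dvd w_prim) => x y hx hy xy.
pose cx : Ctype F d := exist _ x hx; pose cy : Ctype F d := exist _ y hy.
suff : g (cx, i) = g (cy, i) by move/perm_inj/(congr1 (fun ci => val ci.1)).
have [ex2 ex1] := iota_fgen_shape cx i; have [ey2 ey1] := iota_fgen_shape cy i.
rewrite [g (cx, i)]surjective_pairing [g (cy, i)]surjective_pairing ex2 ey2.
by congr pair; apply: val_inj; rewrite ex1 ey1 /= xy.
Qed.

End CyclotomicToWreath.

Lemma iota_fgen_action {g a r} :
  (forall x : Fstar F, val (iota g x) = fgen d w a r (val x)) ->
  exists psi : {perm 'I_d},
    (forall c i, (g (c, i)).2 = psi i /\
       val (g (c, i)).1 = w ^ ((r i * i)%:Z - (psi i)%:Z) * a i * val c ^+ r i)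
    /\ (forall i, coprime (r i) m).
Proof.
move=> gE; have [psi psiE] :=
  fibre_perm g (fun i => (g (c1, i)).2) (fun c i => (iota_fgen_shape gE c i).1).
exists psi; split; last exact: iota_fgen_coprime gE.
move=> c i; have [-> ->] := iota_fgen_shape gE c i.
by rewrite (iota_fgen_coeff gE) psiE; split=> //; ring.
Qed.

Lemma wreath_of_iota_fgen {g a r} :
  (forall x : Fstar F, val (iota g x) = fgen d w a r (val x)) ->
  exists psi b, acts_as_wr d g psi (fun j => Posz (r (psi^-1 j)%g)) b
                /\ forall i, coprime (r i) m.
Proof.
move=> gE; have [psi [g_act r_cop]] := iota_fgen_action gE.
exists psi, (fun j => (g (c1, (psi^-1)%g j)).1); split=> // c i.
have [g2 g1] := g_act c i; split=> //.
by rewrite g1 permK; have [_ ->] := g_act c1 i; rewrite val_c1 expr1n mulr1.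
Qed.

Lemma blockmap_of_iota {g : {perm Omega F d}} {f : F -> F} {psi : {perm 'I_d}} :
  (forall x : Fstar F, val (iota g x) = f (val x)) ->
  (forall c i, (g (c, i)).2 = psi i) -> blockmap d w f psi.
Proof.
move=> gE gpsi i y; split.
  move=> hy; pose cy : Ctype F d := exist (inC d) (y / w ^+ psi i) hy.
  case ex: (g^-1 (cy, psi i))%g => [c k].
  have gck : g (c, k) = (cy, psi i) by rewrite -ex permKV.
  have ki : k = i by apply: (@perm_inj _ psi); rewrite -(gpsi c k) gck.
  subst k; exists (val c * w ^+ i); first exact: inCi_prod (valP c).
  have -> : val c * w ^+ i = val (beta d w (c, i)) by rewrite val_beta.
  by rewrite -gE iota_beta // gck val_beta // divfK ?(wX_neq0 w_prim).
case=> x hx <-; pose cx : Ctype F d := exist (inC d) (x / w ^+ i) hx.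
have -> : x = val (beta d w (cx, i)) by rewrite val_beta // divfK ?(wX_neq0 w_prim).
by rewrite -gE iota_beta // val_beta // gpsi; exact: inCi_prod (valP _).
Qed.

(* The block permutation psi of a map is unique: test it on w^i in C_i. *)
Lemma blockmap_uniq {f : F -> F} {psi psi' : {perm 'I_d}} :
  blockmap d w f psi -> blockmap d w f psi' -> psi = psi'.
Proof.
move=> bm bm'; apply/permP=> i; apply: (@inCi_uniq _ _ _ d_dvd w_prim _ _ (f (w ^+ i))).
  by apply/(bm i); exists (w ^+ i) => //; rewrite -[w ^+ i]mul1r inCi_prod ?inC1.
by apply/(bm' i); exists (w ^+ i) => //; rewrite -[w ^+ i]mul1r inCi_prod ?inC1.
Qed.

Local Notation iota_inv := (iota_inv d_gt0 d_dvd w_prim).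

Lemma gcp_iota_iff (p : {perm Fstar F}) : GCP d w p <-> exists2 g, Wr d g & iota g = p.
Proof.
split.
  case=> a [r [_ _ pE]]; exists (iota_inv p); last exact: iota_invK.
  have gE x : val (iota (iota_inv p) x) = fgen d w a r (val x) by rewrite iota_invK.
  have [psi [b [gwr r_cop]]] := wreath_of_iota_fgen gE.
  by exists psi, (fun j => Posz (r (psi^-1 j)%g)), b; split=> // j; rewrite coprimezE r_cop.
case=> g [psi [s [b [_ gwr]]]] <-; exists (iota_a d w psi s b), (iota_r F d psi s).
by split; [move=> i; exact: repm_range | exact: bij_of_perm (fgen0 _ _ _ _) (iota_wr gwr)
  | exact: iota_wr gwr].
Qed.

Lemma iota_inverse (a : 'I_d -> F) (r : 'I_d -> nat) : bijective (fgen d w a r) ->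
  (exists! psi : {perm 'I_d}, blockmap d w (fgen d w a r) psi) /\
  forall psi, blockmap d w (fgen d w a r) psi ->
  forall g, (forall x : Fstar F, val (iota g x) = fgen d w a r (val x)) ->
  forall (c : Ctype F d) (i : 'I_d), (g (c, i)).2 = psi i /\
    val (g (c, i)).1 = w ^ ((r i * i)%:Z - (psi i)%:Z) * a i * val c ^+ r i.
Proof.
move=> fbij; split; last first.
  move=> psi bm g gE; have [psi0 [g_act _]] := iota_fgen_action gE.
  by rewrite -(blockmap_uniq (blockmap_of_iota gE (fun c i => (g_act c i).1)) bm).
have [p pE] := perm_of_bij (fgen0 d w a r) fbij.
have gE x : val (iota (iota_inv p) x) = fgen d w a r (val x) by rewrite iota_invK.
have [psi [g_act _]] := iota_fgen_action gE.
have bm := blockmap_of_iota gE (fun c i => (g_act c i).1).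
by exists psi; split=> // psi'; exact: blockmap_uniq.
Qed.

Lemma cp_iota_iff (g : {perm Omega F d}) : CP d w (iota g) <->
  exists psi (s : int) b, coprimez s m /\ acts_as_wr d g psi (fun _ => s) b.
Proof.
split.
  case=> a [r0 [_ _ gE]]; have [psi [b [gwr r_cop]]] := wreath_of_iota_fgen gE.
  by exists psi, (Posz r0), b; rewrite coprimezE; split; [exact: r_cop (i0 d_gt0) | exact: gwr].
case=> psi [s [b [_ gwr]]]; exists (iota_a d w psi (fun _ => s) b), (repm F d s).
by split; [exact: repm_range | exact: bij_of_perm (fgen0 _ _ _ _) (iota_wr gwr)
  | exact: iota_wr gwr].
Qed.

Lemma focp_iota_iff (g : {perm Omega F d}) : FOCP d w (iota g) <->
  exists psi b, acts_as_wr d g psi (fun _ => 1) b.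
Proof.
split.
  by case=> a [_ gE]; have [psi [b [gwr _]]] := wreath_of_iota_fgen gE; exists psi, b.
case=> psi [b gwr]; exists (iota_a d w psi (fun _ => 1) b).
have gE x : val (iota g x) = fgen d w (iota_a d w psi (fun _ => 1) b) (fun _ => 1%N) (val x).
  by rewrite (iota_wr gwr); apply: eq_fgen_r => i; rewrite /iota_r repm1.
by split; [exact: bij_of_perm (fgen0 _ _ _ _) gE | exact: gE].
Qed.

End WreathProduct.

Theorem theorem1 (F : finFieldType) (d : nat) (w : F) :
  (0 < d)%N -> (d %| #|F|.-1)%N -> (#|F|.-1).-primitive_root w ->
  bijective (beta d w) /\
  exists iota : {perm Omega F d} -> {perm Fstar F},
    (* iota_w is given by the explicit formula *)
    (forall g psi s b, (forall j, coprimez (s j) (mC F d)) -> acts_as_wr d g psi s b ->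
       forall x : Fstar F,
         val (iota g x) = fgen d w (iota_a d w psi s b) (iota_r F d psi s) (val x)) /\
    (* iota_w is a group isomorphism from the wreath product onto GCP(d,q) *)
    (forall g h, Wr d g -> Wr d h -> iota (g * h)%g = (iota g * iota h)%g) /\
    (forall g h, Wr d g -> Wr d h -> iota g = iota h -> g = h) /\
    (forall p, GCP d w p <-> exists2 g, Wr d g & iota g = p) /\
    (* equivariance: beta (x^g) = beta(x)^(iota g) *)
    (forall g, Wr d g -> forall x, beta d w (g x) = iota g (beta d w x)) /\
    (* the inverse of iota_w *)
    (forall (a : 'I_d -> F) (r : 'I_d -> nat),
       (forall i, 0 < r i <= mC F d)%N -> bijective (fgen d w a r) ->
       (exists! psi : {perm 'I_d}, blockmap d w (fgen d w a r) psi) /\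
       forall psi, blockmap d w (fgen d w a r) psi ->
       forall g, Wr d g -> (forall x : Fstar F, val (iota g x) = fgen d w a r (val x)) ->
       forall (x : Ctype F d) (i : 'I_d),
         (g (x, i)).2 = psi i /\
         val (g (x, i)).1 = w ^ ((r i * i)%:Z - (psi i)%:Z) * a i * val x ^+ r i) /\
    (* (1) *)
    (forall g, Wr d g ->
       (CP d w (iota g) <-> exists psi (s : int) b,
          coprimez s (mC F d) /\ acts_as_wr d g psi (fun _ => s) b)) /\
    (* (2) *)
    (forall g, Wr d g ->
       (FOCP d w (iota g) <-> exists psi b, acts_as_wr d g psi (fun _ => 1) b)).
Proof.
move=> d_gt0 d_dvd w_prim; split; first exact: (beta_bij d_gt0 d_dvd w_prim).
exists (iota d_gt0 d_dvd w_prim).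
split; first by move=> g psi s b _; exact: iota_wr.
split; first by move=> g h _ _; exact: iotaM.
split; first by move=> g h _ _; exact: iota_inj.
split; first exact: gcp_iota_iff.
split; first by move=> g _ x; rewrite iota_beta.
split.
  move=> a r _ fbij; have [uniq_psi act] := iota_inverse d_gt0 d_dvd w_prim a r fbij.
  by split=> // psi bm g _; exact: act.
by split=> g _; [exact: cp_iota_iff | exact: focp_iota_iff].
Qed.
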